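(* Let $A$ be a partially ordered set and $G,H$ games over $A$. If $G=\{G^L\mid G^R\}$ is composite, then $H\lhd G$ if and only if $G\equiv\{H,G^L\mid G^R\}$ (the game obtained from $G$ by adding $H$ as an additional left option). Dually, if $H=\{H^L\mid H^R\}$ is composite, then $H\lhd G$ if and only if $H\equiv\{H^L\mid H^R,G\}$ (the game obtained from $H$ by adding $G$ as an additional right option).
   Context: Games over a poset $A$ are defined inductively: for each $a\in A$ there is an atomic game $[a]$, which has no options; and if $L$ and $R$ are non-empty sets of games, then $\{L\mid R\}$ is a composite game with left options $L$ and right options $R$; we write $\{G^L\mid G^R\}$ for a game with typical left option $G^L$ and right option $G^R$. The relations $\le$ and $\lhd$ are defined by simultaneous recursion: $G\le H$ iff (1) every left option $G^L$ of $G$ satisfies $G^L\lhd H$, (2) every right option $H^R$ of $H$ satisfies $G\lhd H^R$, and (3) if $G$ or $H$ is atomic then $G\lhd H$; and $G\lhd H$ iff (1) some right option $G^R$ of $G$ satisfies $G^R\le H$, or (2) some left option $H^L$ of $H$ satisfies $G\le H^L$, or (3) $G=[a]$, $H=[b]$ are atomic and $a\le b$. $G\equiv H$ means $G\le H$ and $H\le G$. *)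

From mathcomp Require Import all_boot all_order.
Set Implicit Arguments. Unset Strict Implicit. Unset Printing Implicit Defensive.
Import Order.Theory.

(* Games over a poset A.  A composite game {L | R} is given by two
   non-empty index types IL, IR and families of options gl : IL -> game,
   gr : IR -> game (the sets L, R are the images of gl, gr). *)
Inductive game (A : Type) : Type :=
| Atom : A -> game A
| Comp : forall (IL IR : Type), inhabited IL -> inhabited IR ->
    (IL -> game A) -> (IR -> game A) -> game A.

Arguments Atom {A} a.
Arguments Comp {A IL IR} hL hR gl gr.

Definition is_atomic {A : Type} (G : game A) : Prop :=
  match G with Atom _ => True | Comp _ _ _ _ _ _ => False end.

Section Rel.
Context {d : Order.disp_t} {A : porderType d}.

Fixpoint rel (G : game A) : game A -> Prop * Prop :=
  fix relG (H : game A) : Prop * Prop :=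
    let lhd :=
      (match G with
       | Comp _ _ _ _ _ gr => exists j, (rel (gr j) H).1
       | Atom _ => False end)
      \/ (match H with
          | Comp _ _ _ _ hl _ => exists i, (relG (hl i)).1
          | Atom _ => False end)
      \/ (match G, H with
          | Atom a, Atom b => (a <= b)%O
          | _, _ => False end) in
    let le :=
      (match G with
       | Comp _ _ _ _ gl _ => forall i, (rel (gl i) H).2
       | Atom _ => True end)
      /\ (match H with
          | Comp _ _ _ _ _ hr => forall j, (relG (hr j)).2
          | Atom _ => True end)
      /\ ((is_atomic G \/ is_atomic H) -> lhd) in
    (le, lhd).

Definition game_le (G H : game A) : Prop := (rel G H).1.
Definition game_lhd (G H : game A) : Prop := (rel G H).2.
Definition game_equiv (G H : game A) : Prop := game_le G H /\ game_le H G.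

End Rel.

Definition add_left {A : Type} {IL : Type} (X : game A) (gl : IL -> game A)
  : option IL -> game A :=
  fun o => match o with None => X | Some i => gl i end.

Definition add_right {A : Type} {IR : Type} (X : game A) (gr : IR -> game A)
  : option IR -> game A :=
  fun o => match o with None => X | Some j => gr j end.

(* Adding a left option [H] to a composite [G] gives a game [G'] with
   [G <= G'] always, and [G' <= G] holds iff every left option of [G'] is
   [<| G]; the old ones are by reflexivity of [<=], so this is exactly the
   condition [H <| G]. *)
From mathcomp Require Import all_boot all_order.

Section GameOrder.
Context {d : Order.disp_t} {A : porderType d}.

Lemma game_le_comp (IL IR JL JR : Type) hL hR hL' hR'
    (gl : IL -> game A) (gr : IR -> game A)
    (hl : JL -> game A) (hr : JR -> game A) :
  game_le (Comp hL hR gl gr) (Comp hL' hR' hl hr) <->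
  (forall i, game_lhd (gl i) (Comp hL' hR' hl hr)) /\
  (forall j, game_lhd (Comp hL hR gl gr) (hr j)).
Proof.
split=> [[lel [ler _]] // | [lel ler]].
by split=> //; split=> // -[] [].
Qed.

Lemma game_lhd_of_right_option_le {IL IR : Type} {hL hR}
    {gl : IL -> game A} {gr : IR -> game A} {K : game A} (j : IR) :
  game_le (gr j) K -> game_lhd (Comp hL hR gl gr) K.
Proof. by case: K => * /=; left; exists j. Qed.

Lemma game_lhd_of_le_left_option {IL IR : Type} {hL hR}
    {gl : IL -> game A} {gr : IR -> game A} {K : game A} (i : IL) :
  game_le K (gl i) -> game_lhd K (Comp hL hR gl gr).
Proof. by case: K => * /=; right; left; exists i. Qed.

Lemma game_le_refl (G : game A) : game_le G G.
Proof.
elim: G => [? | IL IR hL hR gl IHl gr IHr].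
  by do 2!split=> //; right; right; exact: Order.POrderTheory.lexx.
apply/game_le_comp; split=> [i | j].
  exact: (game_lhd_of_le_left_option _ (IHl i)).
exact: (game_lhd_of_right_option_le _ (IHr j)).
Qed.

Lemma left_option_game_lhd {IL IR : Type} {hL hR}
    {gl : IL -> game A} {gr : IR -> game A} (i : IL) :
  game_lhd (gl i) (Comp hL hR gl gr).
Proof. exact: (game_lhd_of_le_left_option _ (game_le_refl _)). Qed.

Lemma game_lhd_right_option {IL IR : Type} {hL hR}
    {gl : IL -> game A} {gr : IR -> game A} (j : IR) :
  game_lhd (Comp hL hR gl gr) (gr j).
Proof. exact: (game_lhd_of_right_option_le _ (game_le_refl _)). Qed.

Lemma game_lhd_iff_equiv_add_left (IL IR : Type) hL hR
    (gl : IL -> game A) (gr : IR -> game A) (H : game A) :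
  game_lhd H (Comp hL hR gl gr) <->
  game_equiv (Comp hL hR gl gr)
             (Comp (inhabits (@None IL)) hR (add_left H gl) gr).
Proof.
split=> [lhdHG | [_ /game_le_comp [lhd_left _]]]; last exact: (lhd_left None).
split; apply/game_le_comp; split=> [i | j]; do ?exact: game_lhd_right_option.
  exact: (game_lhd_of_le_left_option (Some i) (game_le_refl _)).
by case: i => [i |] //=; exact: left_option_game_lhd.
Qed.

Lemma game_lhd_iff_equiv_add_right (IL IR : Type) hL hR
    (hl : IL -> game A) (hr : IR -> game A) (G : game A) :
  game_lhd (Comp hL hR hl hr) G <->
  game_equiv (Comp hL hR hl hr)
             (Comp hL (inhabits (@None IR)) hl (add_right G hr)).
Proof.
split=> [lhdHG | [/game_le_comp [_ lhd_right] _]]; last exact: (lhd_right None).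
split; apply/game_le_comp; split=> [i | j]; do ?exact: left_option_game_lhd.
  by case: j => [j |] //=; exact: game_lhd_right_option.
exact: (game_lhd_of_right_option_le (Some j) (game_le_refl _)).
Qed.

End GameOrder.

Theorem lemma4p10 (d : Order.disp_t) (A : porderType d) :
  (forall (IL IR : Type) (hL : inhabited IL) (hR : inhabited IR)
          (gl : IL -> game A) (gr : IR -> game A) (H : game A),
     game_lhd H (Comp hL hR gl gr) <->
     game_equiv (Comp hL hR gl gr)
                (Comp (inhabits (@None IL)) hR (add_left H gl) gr))
  /\
  (forall (IL IR : Type) (hL : inhabited IL) (hR : inhabited IR)
          (hl : IL -> game A) (hr : IR -> game A) (G : game A),
     game_lhd (Comp hL hR hl hr) G <->
     game_equiv (Comp hL hR hl hr)
                (Comp hL (inhabits (@None IR)) hl (add_right G hr))).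
Proof.
split=> *; [exact: game_lhd_iff_equiv_add_left | exact: game_lhd_iff_equiv_add_right].
Qed.
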